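(* Let $\mathcal O\subseteq\mathrm{dS}^d$ be open and let $C=\{y\in\mathbb R^{1+d}:\beta(x,y)>-1\text{ for all }x\in\mathcal O\}$ (a convex subset of $\mathbb R^{1+d}$). Then $\mathcal O'=C^\circ\cap\mathrm{dS}^d$, where $C^\circ$ is the interior of $C$ in $\mathbb R^{1+d}$.
   Context: Let $d\ge1$, $\beta(x,y)=x_0y_0-x_1y_1-\dots-x_dy_d$ on $\mathbb R^{1+d}$, $\mathrm{dS}^d=\{x:\beta(x,x)=-1\}$. For open $\mathcal O\subseteq\mathrm{dS}^d$, its (open) spacelike complement is $\mathcal O'=$ the interior, relative to $\mathrm{dS}^d$, of $\{y\in\mathrm{dS}^d:\beta(x,y)>-1\ \text{for all } x\in\mathcal O\}$. *)

(* Points of R^{1+d} are row vectors 'rV[R]_(d.+1),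
   with the product (matrix) topology; coordinate 0 is the time coordinate. *)
From HB Require Import structures.
From mathcomp Require Import all_boot all_order all_algebra.
From mathcomp Require Import all_classical all_reals all_analysis.
Set Implicit Arguments. Unset Strict Implicit. Unset Printing Implicit Defensive.
Import Order.TTheory GRing.Theory Num.Theory.
Import numFieldNormedType.Exports.
Local Open Scope ring_scope.
Local Open Scope classical_set_scope.

Definition beta (R : realType) (d : nat) (x y : 'rV[R]_(d.+1)) : R :=
  x ord0 ord0 * y ord0 ord0
  - \sum_(i < d) x ord0 (lift ord0 i) * y ord0 (lift ord0 i).

Definition dS (R : realType) (d : nat) : set 'rV[R]_(d.+1) :=
  [set x | beta x x = -1].

Definition rel_open (T : topologicalType) (S A : set T) : Prop :=
  exists U : set T, open U /\ A = U `&` S.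

Definition rel_interior (T : topologicalType) (S A : set T) : set T :=
  [set y | S y /\ exists U : set T, [/\ open U, U y & U `&` S `<=` A]].

Definition Cset (R : realType) (d : nat) (O : set 'rV[R]_(d.+1)) : set 'rV[R]_(d.+1) :=
  [set y | forall x, O x -> -1 < beta x y].

(* spacelike complement O' : interior relative to dS^d of {y in dS^d : ...} *)
Definition spacelike_compl (R : realType) (d : nat) (O : set 'rV[R]_(d.+1))
  : set 'rV[R]_(d.+1) :=
  rel_interior (@dS R d) [set y | @dS R d y /\ forall x, O x -> -1 < beta x y].

From HB Require Import structures.
From mathcomp Require Import all_boot all_order all_algebra.
From mathcomp Require Import all_classical all_reals all_analysis.
From mathcomp Require Import ring lra.
Set Implicit Arguments. Unset Strict Implicit. Unset Printing Implicit Defensive.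
Import Order.TTheory GRing.Theory Num.Theory.
Import numFieldNormedType.Exports.
Local Open Scope ring_scope.
Local Open Scope classical_set_scope.

(* The inclusion from right to left is immediate.  Conversely, let y be in O'
   and z close to y; then beta z z is close to -1.  If beta z z <= -1, then z
   is the midpoint of two points z +- u of dS^d close to y (u spacelike and
   orthogonal to z); if -1 < beta z z < 0, then z = t w with w in dS^d close
   to y and 0 < t < 1.  Since C is convex and contains 0, z lies in C in both
   cases. *)

Section Minkowski.
Variables (R : realType) (d : nat).
Local Notation V := 'rV[R]_(d.+1).
Implicit Types (x y z u v w : V) (O : set V).

Lemma betaC x y : beta x y = beta y x.
Proof. by rewrite /beta mulrC; congr (_ - _); apply: eq_bigr => i _; rewrite mulrC. Qed.

Lemma betaDr x y z : beta x (y + z) = beta x y + beta x z.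
Proof.
rewrite /beta !mxE mulrDr.
under eq_bigr do rewrite !mxE mulrDr.
rewrite big_split /=; ring.
Qed.

Lemma betaZr x y (a : R) : beta x (a *: y) = a * beta x y.
Proof.
rewrite /beta !mxE mulrBr mulr_sumr mulrCA; congr (_ - _).
by apply: eq_bigr => i _; rewrite !mxE mulrCA.
Qed.

Lemma betaNr x y : beta x (- y) = - beta x y.
Proof. by rewrite -scaleN1r betaZr mulN1r. Qed.

Lemma betaBr x y z : beta x (y - z) = beta x y - beta x z.
Proof. by rewrite betaDr betaNr. Qed.

Lemma betaDl x y z : beta (x + y) z = beta x z + beta y z.
Proof. by rewrite betaC betaDr !(betaC z). Qed.

Lemma betaBl x y z : beta (x - y) z = beta x z - beta y z.
Proof. by rewrite betaC betaBr !(betaC z). Qed.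

Lemma betaZl x y (a : R) : beta (a *: x) y = a * beta x y.
Proof. by rewrite betaC betaZr betaC. Qed.

Lemma beta_diag_continuous : continuous (fun z : V => beta z z).
Proof.
move=> y; have c := @coord_continuous R 1 d.+1.
apply: (cvgB (cvgM (c _ _ y) (c _ _ y))).
apply: cvg_big => [|i _]; [exact: add_continuous | exact: (cvgM (c _ _ y) (c _ _ y))].
Qed.

Definition e0 : V := \row_(j < d.+1) (j == ord0)%:R.

Lemma beta_e0r x : beta x e0 = x ord0 ord0.
Proof.
rewrite /beta /e0 !mxE eqxx mulr1 big1 ?subr0 // => i _.
by rewrite mxE eq_sym (negbTE (neq_lift ord0 i)) mulr0.
Qed.

Lemma beta_e0l x : beta e0 x = x ord0 ord0.
Proof. by rewrite betaC beta_e0r. Qed.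

Lemma dS_add_orth z v (m : R) :
  beta z v = 0 -> m ^+ 2 * beta v v = -1 - beta z z -> dS (z + m *: v).
Proof.
move=> zv mv; rewrite /dS /= betaDl !betaDr !betaZl !betaZr (betaC v) zv.
by rewrite mulrA -expr2 mv; ring.
Qed.

Definition orth_dir z : V := e0 - (z ord0 ord0 / beta z z) *: z.

Lemma beta_orth_dir z : beta z z != 0 -> beta z (orth_dir z) = 0.
Proof. by move=> qz; rewrite betaBr betaZr beta_e0r; field. Qed.

Lemma orth_dir_spacelike z : beta z z < 0 -> 0 < beta (orth_dir z) (orth_dir z).
Proof.
move=> qz; have qz0 : beta z z != 0 by rewrite lt_eqF.
rewrite {1}/orth_dir betaBl betaZl beta_orth_dir // mulr0 subr0.
rewrite /orth_dir betaBr betaZr !beta_e0l /e0 !mxE eqxx mulr1n.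
have : z ord0 ord0 / beta z z * z ord0 ord0 <= 0.
  by rewrite mulrAC -expr2 mulr_ge0_le0 ?sqr_ge0 // invr_le0 ltW.
by lra.
Qed.

Lemma orth_dir_cvg y : beta y y != 0 -> orth_dir z @[z --> y] --> orth_dir y.
Proof.
move=> qy; have Fy := nbhs_filter y.
have z0 := @coord_continuous R 1 d.+1 ord0 ord0 y.
have c := cvgM (FF := Fy) z0 (cvgV (FF := Fy) qy (beta_diag_continuous (x := y))).
exact: (cvgB (FF := Fy) (cvg_cst e0) (cvgZ (FF := Fy) c cvg_id)).
Qed.

Definition split_vec z : V :=
  Num.sqrt ((-1 - beta z z) / beta (orth_dir z) (orth_dir z)) *: orth_dir z.

Lemma dS_split z : beta z z <= -1 -> dS (z + split_vec z) /\ dS (z - split_vec z).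
Proof.
move=> qz1; have qz : beta z z < 0 by lra.
have vv := orth_dir_spacelike qz.
have zv : beta z (orth_dir z) = 0 by rewrite beta_orth_dir ?lt_eqF.
have mv : Num.sqrt ((-1 - beta z z) / beta (orth_dir z) (orth_dir z)) ^+ 2 *
    beta (orth_dir z) (orth_dir z) = -1 - beta z z.
  by rewrite sqr_sqrtr ?divfK ?gt_eqF //; apply: divr_ge0; [lra | exact: ltW].
split; first exact: dS_add_orth.
by rewrite -scaleNr; apply: dS_add_orth; rewrite ?sqrrN.
Qed.

Lemma split_vec_cvg0 y : dS y -> split_vec z @[z --> y] --> (0 : V).
Proof.
move=> dSy; have Fy := nbhs_filter y.
have qy : beta y y < 0 by rewrite dSy ltrN10.
have vv := orth_dir_spacelike qy.
have orth_cvg := orth_dir_cvg (ltr0_neq0 qy).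
have vv_cvg := continuous_cvg Fy (beta_diag_continuous (x := orth_dir y)) orth_cvg.
have num_cvg := cvgB (FF := Fy) (@cvg_cst _ (-1 : R) _ _ Fy) (beta_diag_continuous (x := y)).
have m_cvg := continuous_cvg Fy (@sqrt_continuous R _)
  (cvgM (FF := Fy) num_cvg (cvgV (FF := Fy) (lt0r_neq0 vv) vv_cvg)).
rewrite dSy subrr mul0r sqrtr0 in m_cvg.
by rewrite -(scale0r (orth_dir y)); exact: (cvgZ (FF := Fy) m_cvg orth_cvg).
Qed.

Definition normalize z : V := (Num.sqrt (- beta z z))^-1 *: z.

Lemma dS_normalize z : beta z z < 0 -> dS (normalize z).
Proof.
move=> qz; rewrite /dS /= /normalize betaZl betaZr mulrA -expr2 exprVn.
by rewrite sqr_sqrtr ?oppr_ge0 ?ltW // invrN mulNr mulVf ?ltr0_neq0.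
Qed.

Lemma normalizeK z : beta z z < 0 -> Num.sqrt (- beta z z) *: normalize z = z.
Proof.
move=> qz; rewrite /normalize scalerA mulfV ?scale1r // gt_eqF //.
by rewrite sqrtr_gt0 oppr_gt0.
Qed.

Lemma normalize_cvg y : dS y -> normalize z @[z --> y] --> y.
Proof.
move=> dSy; have Fy := nbhs_filter y.
have s_cvg := continuous_cvg Fy (@sqrt_continuous R _)
  (cvgN (FF := Fy) (beta_diag_continuous (x := y))).
rewrite dSy opprK sqrtr1 in s_cvg.
have := cvgZ (FF := Fy) (cvgV (FF := Fy) (oner_neq0 R) s_cvg) cvg_id.
by rewrite invr1 scale1r.
Qed.

Lemma Cset_midpoint O z u : Cset O (z + u) -> Cset O (z - u) -> Cset O z.
Proof.
move=> Czu Czu' x Ox; have := Czu x Ox; have := Czu' x Ox.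
by rewrite !betaDr betaNr; lra.
Qed.

Lemma Cset_scale O w (t : R) : 0 <= t <= 1 -> Cset O w -> Cset O (t *: w).
Proof.
move=> /andP[t0 t1] Cw x Ox; rewrite betaZr.
have [b0|b0] := leP 0 (beta x w); first by have := mulr_ge0 t0 b0; lra.
have : beta x w <= t * beta x w by rewrite ler_nMl.
by have := Cw x Ox; lra.
Qed.

Lemma spacelike_compl_sub_interior O : spacelike_compl O `<=` interior (Cset O).
Proof.
move=> y [dSy [U [oU Uy sub]]].
have Unbhs : nbhs y U by apply: open_nbhs_nbhs.
have CU w : U w -> dS w -> Cset O w by move=> Uw dSw; have [] := sub w (conj Uw dSw).
have Fy := nbhs_filter y.
have plus_cvg := cvgD (FF := Fy) cvg_id (split_vec_cvg0 dSy).
have minus_cvg := cvgB (FF := Fy) cvg_id (split_vec_cvg0 dSy).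
rewrite addr0 in plus_cvg; rewrite subr0 in minus_cvg.
near=> z.
have qz : beta z z < 0.
  near: z; have := @cvgr_lt R _ _ Fy _ _ (beta_diag_continuous (x := y)).
  by rewrite dSy; apply; rewrite ltrN10.
have [qz1|qz1] := lerP (beta z z) (-1).
  have [dSp dSm] := dS_split qz1.
  apply: (@Cset_midpoint _ _ (split_vec z)); apply: CU => //; near: z.
  - exact: plus_cvg.
  - exact: minus_cvg.
rewrite -(normalizeK qz); apply: Cset_scale.
  by rewrite sqrtr_ge0 -sqrtr1 ler_sqrt //; lra.
apply: CU (dS_normalize qz); near: z; exact: normalize_cvg.
Unshelve. all: by end_near.
Qed.

End Minkowski.

Theorem mainTheorem12 (R : realType) (d : nat) (hd : (1 <= d)%N)
  (O : set 'rV[R]_(d.+1)) (hO : rel_open (@dS R d) O) :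
  spacelike_compl O = interior (Cset O) `&` @dS R d.
Proof.
apply/seteqP; split => y.
  by move=> Oy; split; [exact: spacelike_compl_sub_interior | case: Oy].
move=> [Cy dSy]; split => //; exists (interior (Cset O)).
split; [exact: open_interior | done |].
by move=> z [Cz dSz]; split => //; exact: (interior_subset Cz).
Qed.
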